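(* Let $\mathcal{G}_L=(\mathcal{V}_L,\mathcal{E}_L)$ be a coloured graph obtained from complete graphs $G_1,\dots,G_L$ by the inductive construction described in the context, with vertex weights $w(v)$ and edge weights $w(e)$. Let $t>0$ and consider the hopping Hamiltonian $H_{\mathrm{hop}}=\sum_{v,v'\in\mathcal{V}_L}\sum_{\sigma=\uparrow,\downarrow}t_{v,v'}c_{v,\sigma}^\dagger c_{v',\sigma}$, where $t_{v,v'}=w(e)t$ if $e=\{v,v'\}\in\mathcal{E}_L$, $t_{v,v}=w(v)t$, and $t_{v,v'}=0$ otherwise. Then the lowest single-electron energy of $H_{\mathrm{hop}}$ is $0$, and this eigenvalue is $(|\mathcal{V}_L|-L)$-fold degenerate (per spin direction).
   Context: Construction. Let $G_l=(V_l,E_l)$, $l=1,\dots,L$, be complete graphs with $|V_l|\ge 2$ and $E_l=\{\{v,v'\}: v,v'\in V_l, v\neq v'\}$. In each $V_l$ one vertex $v_l^0$ is painted black, all other vertices of $V_l$ are painted white. Set $\mathcal{G}_1=G_1$ with this colouring. For $l=2,\dots,L$: choose an integer $z_l$ with $0<z_l\le |V_l|-1$, choose $z_l$ white vertices of $V_l$ and identify each of them with a vertex (black or white; distinct chosen vertices with distinct vertices) of $\mathcal{V}_{l-1}$; then $\mathcal{V}_l=\mathcal{V}_{l-1}\cup V_l$ with these identifications, $\mathcal{E}_l=\mathcal{E}_{l-1}\cup E_l$ where edges joining the same two vertices are merged into one edge. A white vertex identified with a black one becomes black; two identified white vertices stay white; the black vertex $v_l^0$ is never identified with an earlier vertex.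 Thus the black vertices of $\mathcal{G}_L$ are exactly $v_1^0,\dots,v_L^0$ and the set $\mathcal{V}_L^{W}$ of white vertices has $|\mathcal{V}_L|-L$ elements; the sets $V_l,E_l$ are regarded as subsets of $\mathcal{V}_L,\mathcal{E}_L$. The weight $w(v)$ of $v\in\mathcal{V}_L$ is the number of $l$ with $v\in V_l$; the weight $w(e)$ of $e\in\mathcal{E}_L$ is the number of $l$ with $e\in E_l$. Fermions: $c_{v,\sigma},c_{v,\sigma}^\dagger$ ($v\in\mathcal{V}_L$, $\sigma\in\{\uparrow,\downarrow\}$) satisfy the canonical anticommutation relations $\{c_{v,\sigma},c_{v',\tau}\}=0$, $\{c^\dagger_{v,\sigma},c_{v',\tau}\}=\delta_{v,v'}\delta_{\sigma,\tau}$. *)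

From mathcomp Require Import all_boot all_order all_algebra.
Set Implicit Arguments. Unset Strict Implicit. Unset Printing Implicit Defensive.
Import Order.TTheory GRing.Theory Num.Theory.
Local Open Scope ring_scope.

(* The coloured graph G_L, described by the result of the inductive
   construction: vertex set 'I_N (= V_L), the L building blocks
   V l : {set 'I_N} (l : 'I_L, 0-based, block l corresponds to G_{l+1}),
   and the black vertex b l of block l. *)
Definition construction (N L : nat) (V : 'I_L -> {set 'I_N}) (b : 'I_L -> 'I_N) : Prop :=
  [/\ (0 < L)%N,
      \bigcup_(l < L) V l = [set: 'I_N],
      (forall l, 2 <= #|V l|)%N /\ (forall l, b l \in V l),
      (* v_l^0 is never identified with an earlier vertex *)
      (forall l m : 'I_L, (m < l)%N -> b l \notin V m) &
      (* z_l > 0 : at least one vertex of V_l is identified with an earlier one,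
         for l >= 2 (0-based l >= 1) *)
      (forall l : 'I_L, (0 < l)%N ->
         (0 < #|V l :&: \bigcup_(m < L | (m < l)%N) V m|)%N)].

Definition black N L (b : 'I_L -> 'I_N) : {set 'I_N} := [set b l | l : 'I_L].

Definition vweight N L (V : 'I_L -> {set 'I_N}) (v : 'I_N) : nat :=
  #|[set l : 'I_L | v \in V l]|.

Definition eweight N L (V : 'I_L -> {set 'I_N}) (v v' : 'I_N) : nat :=
  #|[set l : 'I_L | (v \in V l) && (v' \in V l)]|.

Definition is_edge N L (V : 'I_L -> {set 'I_N}) (v v' : 'I_N) : bool :=
  (v != v') && [exists l : 'I_L, (v \in V l) && (v' \in V l)].

(* Hopping matrix t_{v,v'} (the single-electron Hamiltonian for each spin
   direction): H_hop = sum_{v,v',sigma} t_{v,v'} c^dag_{v,sigma} c_{v',sigma}. *)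
Definition hopping (C : numClosedFieldType) N L (V : 'I_L -> {set 'I_N}) (t : C)
  : 'M[C]_N :=
  \matrix_(v, v')
    if v == v' then (vweight V v)%:R * t
    else if is_edge V v v' then (eweight V v v')%:R * t else 0.

From mathcomp Require Import all_boot all_order all_algebra.
Set Implicit Arguments. Unset Strict Implicit. Unset Printing Implicit Defensive.
Import Order.TTheory GRing.Theory Num.Theory Num.Def.
Local Open Scope ring_scope.

(* Let B be the L x N incidence matrix of the blocks,
   B l v = [v \in V_l].  Since (B^* B) v v' counts the blocks containing both
   v and v', the hopping matrix is the scaled Gram matrix  H = t B^* B.
   1. Gram matrices A^* A are positive semidefinite: x A^* A x^* = |x A^*|^2.
      Hence every eigenvalue of t A^* A (t >= 0) is nonnegative, and for t != 0
      its kernel is the kernel of A^*, of dimension N - rank A.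
   2. The incidence matrix has full row rank L: its columns at the black
      vertices b_1, ..., b_L form a triangular matrix with unit diagonal,
      because v_l^0 lies in V_l but in no earlier block.
   3. There is at least one white vertex (a second vertex of V_1), so
      N > L and the zero eigenspace, of dimension N - L, is nontrivial. *)

Section GramMatrices.

Variable C : numClosedFieldType.

Definition conjT m n (A : 'M[C]_(m, n)) : 'M[C]_(n, m) := (map_mx conjC A)^T.

Lemma conjT_mul m n p (A : 'M[C]_(m, n)) (B : 'M[C]_(n, p)) :
  conjT (A *m B) = conjT B *m conjT A.
Proof. by rewrite /conjT map_mxM trmx_mul. Qed.

Lemma conjTK m n (A : 'M[C]_(m, n)) : conjT (conjT A) = A.
Proof.
by apply/matrixP => i j; rewrite !mxE conjCK.
Qed.

Definition sqnorm n (x : 'rV[C]_n) : C := (x *m conjT x) 0 0.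

Lemma sqnormE n (x : 'rV[C]_n) : sqnorm x = \sum_j x 0 j * (x 0 j)^*.
Proof. by rewrite /sqnorm mxE; apply: eq_bigr => j _; rewrite !mxE. Qed.

Lemma sqnorm_ge0 n (x : 'rV[C]_n) : 0 <= sqnorm x.
Proof. by rewrite sqnormE; apply: sumr_ge0 => j _; apply: mul_conjC_ge0. Qed.

Lemma sqnorm_eq0 n (x : 'rV[C]_n) : sqnorm x = 0 -> x = 0.
Proof.
rewrite sqnormE => /psumr_eq0P-/(_ (fun j _ => mul_conjC_ge0 _)) x0.
apply/matrixP => i j; rewrite (ord1 i) mxE.
by apply/eqP; rewrite -mul_conjC_eq0 x0.
Qed.

Lemma gram_formE m n (A : 'M[C]_(m, n)) (x : 'rV[C]_n) :
  (x *m (conjT A *m A) *m conjT x) 0 0 = sqnorm (x *m conjT A).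
Proof. by rewrite /sqnorm conjT_mul conjTK !mulmxA. Qed.

Definition psd n (M : 'M[C]_n) : Prop :=
  forall x : 'rV[C]_n, 0 <= (x *m M *m conjT x) 0 0.

Lemma psd_gram m n (A : 'M[C]_(m, n)) (t : C) :
  0 <= t -> psd (t *: (conjT A *m A)).
Proof.
move=> t_ge0 x; rewrite -scalemxAr -scalemxAl mxE gram_formE.
by rewrite mulr_ge0 // sqnorm_ge0.
Qed.

(* A positive semidefinite matrix has only nonnegative eigenvalues:
   if x M = a x with x != 0 then a |x|^2 = x M x^* >= 0. *)
Lemma psd_eigenvalue_ge0 n (M : 'M[C]_n) (a : C) :
  psd M -> eigenvalue M a -> 0 <= a.
Proof.
move=> M_psd /eigenvalueP [x xM x_neq0].
have x_pos : 0 < sqnorm x.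
  rewrite lt_def sqnorm_ge0 andbT; apply/eqP => /sqnorm_eq0 x0.
  by rewrite x0 eqxx in x_neq0.
have := M_psd x; rewrite xM -scalemxAl mxE -/(sqnorm x).
by rewrite pmulr_lge0.
Qed.

(* For t != 0 the kernel of t A^* A is the kernel of A^*:
   x A^* A = 0 forces |x A^*|^2 = 0. *)
Lemma kermx_gram m n (A : 'M[C]_(m, n)) (t : C) :
  t != 0 -> (kermx (t *: (conjT A *m A)) == kermx (conjT A))%MS.
Proof.
move=> t_neq0; apply/andP; split; apply/rV_subP => x /sub_kermxP xK;
  apply/sub_kermxP.
- apply: sqnorm_eq0; rewrite -gram_formE.
  move: xK; rewrite -scalemxAr => /eqP; rewrite scalemx_eq0 (negbTE t_neq0).
  by move=> /eqP ->; rewrite mul0mx mxE.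
- by rewrite -scalemxAr mulmxA xK mul0mx scaler0.
Qed.

Lemma rank_kermx_gram m n (A : 'M[C]_(m, n)) (t : C) :
  t != 0 -> \rank (kermx (t *: (conjT A *m A))) = (n - \rank A)%N.
Proof.
move=> t_neq0; rewrite (eqmxP (kermx_gram A t_neq0)) mxrank_ker.
by rewrite /conjT mxrank_tr mxrank_map.
Qed.

End GramMatrices.

Lemma rank_triangular_columns (F : fieldType) L N (A : 'M[F]_(L, N))
    (b : 'I_L -> 'I_N) :
  (forall l, A l (b l) \is a GRing.unit) ->
  (forall l m : 'I_L, (m < l)%N -> A m (b l) = 0) ->
  \rank A = L.
Proof.
move=> diag_unit below0; apply/eqP; rewrite eqn_leq rank_leq_row /=.
have trig : is_trig_mx (colsub b A).
  by apply/is_trig_mxP => m l ml; rewrite mxE below0.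
have unitA : colsub b A \in unitmx.
  by rewrite unitmxE det_trig // unitr_prod // => l _; rewrite mxE.
rewrite -[X in (X <= _)%N](mxrank_unit unitA).
by rewrite -[A in colsub b A]mulmx1 -mulmx_colsub mxrankM_maxl.
Qed.

Section Construction.

Variables (N L : nat) (V : 'I_L -> {set 'I_N}) (b : 'I_L -> 'I_N).

Definition incidence (C : numClosedFieldType) : 'M[C]_(L, N) :=
  \matrix_(l, v) (v \in V l)%:R.

(* The hopping matrix is the scaled Gram matrix t B^* B: the entry
   (B^* B) v v' counts the blocks containing both v and v', which is
   w(v) on the diagonal and w({v,v'}) (or 0 for a non-edge) off it. *)
Lemma hopping_gram (C : numClosedFieldType) (t : C) :
  hopping V t = t *: (conjT (incidence C) *m incidence C).
Proof.
apply/matrixP => v w; rewrite !mxE.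
have -> : \sum_l conjT (incidence C) v l * incidence C l w = (eweight V v w)%:R.
  rewrite /eweight -sum1_card natr_sum [RHS]big_mkcond /=.
  apply: eq_bigr => l _; rewrite !mxE conjC_nat inE.
  by case: (v \in V l); case: (w \in V l); rewrite ?mulr1 ?mulr0.
case: eqP => [<-|/eqP v_neq_w].
  rewrite mulrC /vweight /eweight; congr (_ * _%:R).
  by apply: eq_card => l; rewrite !inE andbb.
rewrite /is_edge v_neq_w /=; case: existsP => [_|no_block]; first by rewrite mulrC.
suff -> : eweight V v w = 0%N by rewrite mulr0.
apply/eqP; rewrite cards_eq0; apply/eqP/setP => l; rewrite !inE.
by apply/negP => vw_in; apply: no_block; exists l.
Qed.

Hypothesis VbG : construction V b.

Lemma rank_incidence (C : numClosedFieldType) : \rank (incidence C) = L.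
Proof.
case: VbG => _ _ [_ b_in] b_new _.
apply: (rank_triangular_columns (b := b)) => [l|l m ml]; rewrite mxE.
  by rewrite b_in unitr1.
by rewrite (negbTE (b_new l m ml)).
Qed.

Lemma black_inj : injective b.
Proof.
case: VbG => _ _ [_ b_in] b_new _ l m blm.
case: (ltngtP l m) => [lm|ml|/val_inj //].
  by have := b_new m l lm; rewrite -blm b_in.
by have := b_new l m ml; rewrite blm b_in.
Qed.

(* A second vertex of the first block V_1 is white, so there are more
   vertices than black vertices. *)
Lemma blocks_lt_vertices : (L < N)%N.
Proof.
case: VbG => L_gt0 _ [card_V b_in] b_new _; pose l0 : 'I_L := Ordinal L_gt0.
have : (0 < #|V l0 :\ b l0|)%N by have := card_V l0; rewrite (cardsD1 (b l0)) b_in.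
case/card_gt0P => w; rewrite !inE => /andP [w_neq_b w_in].
have w_white : w \notin black b.
  apply/imsetP => -[l _ wE]; case: (posnP l) => [l_eq0 | l_gt0].
    by rewrite wE (_ : l = l0) ?eqxx // in w_neq_b; apply: val_inj.
  by have := b_new l l0 l_gt0; rewrite -wE w_in.
have : black b \proper [set: 'I_N].
  by rewrite properT; apply/eqP/setP => /(_ w); rewrite inE (negbTE w_white).
move/proper_card; rewrite cardsT card_ord card_imset ?card_ord //.
exact: black_inj.
Qed.

End Construction.

Theorem proposition1 (C : numClosedFieldType) (N L : nat)
    (V : 'I_L -> {set 'I_N}) (b : 'I_L -> 'I_N) (t : C) :
  construction V b -> 0 < t ->
  [/\ eigenvalue (hopping V t) 0,
      (forall a : C, eigenvalue (hopping V t) a -> 0 <= a) &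
      \rank (eigenspace (hopping V t) 0) = (N - L)%N].
Proof.
move=> VbG t_gt0; have t_neq0 : t != 0 by rewrite gt_eqF.
have zero_eigenspace : \rank (eigenspace (hopping V t) 0) = (N - L)%N.
  rewrite /eigenspace raddf0 subr0 hopping_gram rank_kermx_gram //.
  by rewrite (rank_incidence VbG).
split=> //.
- rewrite /eigenvalue -mxrank_eq0 zero_eigenspace subn_eq0 -ltnNge.
  exact: blocks_lt_vertices VbG.
- by move=> a; rewrite hopping_gram; apply/psd_eigenvalue_ge0/psd_gram/ltW.
Qed.
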